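(* Let $n\ge2$ and let $U$ be a domain of $\mathbb{R}^n$. For every $v\in C^\infty(U)$, in $U$ we have $$\Big|\,|D^2vDv|^2-\Delta v\,\Delta_\infty v-\tfrac12\big[|D^2v|^2-(\Delta v)^2\big]|Dv|^2\Big|\le\frac{n-2}{2}\Big[|D^2v|^2|Dv|^2-|D^2vDv|^2\Big].$$
   Context: $\Delta v=\operatorname{div}(Dv)$, $\Delta_\infty v=\langle D^2v\,Dv,Dv\rangle$, and $|D^2v|$ is the Frobenius (Hilbert–Schmidt) norm of the Hessian. *)

From HB Require Import structures.
From mathcomp Require Import all_boot all_order all_algebra.
From mathcomp Require Import all_classical all_reals all_analysis.
Set Implicit Arguments. Unset Strict Implicit. Unset Printing Implicit Defensive.
Import Order.TTheory GRing.Theory Num.Theory.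
Import numFieldNormedType.Exports.
Local Open Scope classical_set_scope.
Local Open Scope ring_scope.

Definition basis_vec (R : realType) (n : nat) (i : 'I_n) : 'rV[R]_n :=
  delta_mx 0 i.

Definition partial (R : realType) (n : nat) (f : 'rV[R]_n -> R) (i : 'I_n)
  : 'rV[R]_n -> R := fun x => 'D_(basis_vec R i) f x.

Fixpoint Ck (R : realType) (n : nat) (U : set 'rV[R]_n) (k : nat)
  (f : 'rV[R]_n -> R) : Prop :=
  match k with
  | 0 => {in U, continuous f}
  | k'.+1 => (forall x, U x -> differentiable f x) /\
             (forall i : 'I_n, Ck U k' (partial f i))
  end.

Definition smooth_on (R : realType) (n : nat) (U : set 'rV[R]_n)
  (f : 'rV[R]_n -> R) : Prop := forall k, Ck U k f.

Definition domain (R : realType) (n : nat) (U : set 'rV[R]_n) : Prop :=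
  open U /\ connected U /\ U !=set0.

Definition Dv (R : realType) (n : nat) (v : 'rV[R]_n -> R) (x : 'rV[R]_n)
  (i : 'I_n) : R := partial v i x.
Definition D2v (R : realType) (n : nat) (v : 'rV[R]_n -> R) (x : 'rV[R]_n)
  (i j : 'I_n) : R := partial (partial v j) i x.

Definition grad_sq (R : realType) (n : nat) v (x : 'rV[R]_n) : R :=
  \sum_i Dv v x i ^+ 2.
Definition lap (R : realType) (n : nat) v (x : 'rV[R]_n) : R :=
  \sum_i D2v v x i i.
Definition inflap (R : realType) (n : nat) v (x : 'rV[R]_n) : R :=
  \sum_i \sum_j D2v v x i j * Dv v x i * Dv v x j.
Definition hessgrad_sq (R : realType) (n : nat) v (x : 'rV[R]_n) : R :=
  \sum_i (\sum_j D2v v x i j * Dv v x j) ^+ 2.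
Definition hess_sq (R : realType) (n : nat) v (x : 'rV[R]_n) : R :=
  \sum_i \sum_j D2v v x i j ^+ 2.

(* At a point put H = D^2 v, symmetric by Schwarz's theorem, and p = Dv; let
   gap = |H|^2 |p|^2 - |H p|^2 and residual = |(tr H) p - H p|^2.  The
   left-hand side is (residual - gap) / 2, so it suffices that
   (3 - n) gap <= residual <= (n - 1) gap.  The l-th entry of (tr H) p - H p is
   the sum over i <> l of the minors H_ii p_l - H_il p_i, so by Cauchy-Schwarz
   the residual is at most n - 1 times the sum of all squared minors; by the
   Lagrange identity the squared minors of row i add up to at most the
   Cauchy-Schwarz defect |H_i|^2 |p|^2 - (H_i . p)^2 of that row, and these
   defects add up to the gap.  The lower bound is trivial for n >= 3 and an
   identity for n = 2. *)

From HB Require Import structures.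
From mathcomp Require Import all_boot all_order all_algebra.
From mathcomp Require Import all_classical all_reals all_analysis.
From mathcomp Require Import ring lra.
Set Implicit Arguments. Unset Strict Implicit. Unset Printing Implicit Defensive.
Import Order.TTheory GRing.Theory Num.Theory.
Import numFieldNormedType.Exports.
Local Open Scope classical_set_scope.
Local Open Scope ring_scope.

Section SumsOfSquares.
Variables (R : realFieldType) (I : finType).

Lemma lagrange_identity (P : pred I) (x y : I -> R) :
  \sum_(i | P i) \sum_(j | P j) (x i * y j - x j * y i) ^+ 2 =
  2 * ((\sum_(i | P i) x i ^+ 2) * (\sum_(i | P i) y i ^+ 2)
       - (\sum_(i | P i) x i * y i) ^+ 2).
Proof.
pose f i j := x i ^+ 2 * y j ^+ 2 - x i * y i * (x j * y j).
have -> : \sum_(i | P i) \sum_(j | P j) (x i * y j - x j * y i) ^+ 2 =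
          \sum_(i | P i) \sum_(j | P j) (f i j + f j i).
  by apply: eq_bigr => i _; apply: eq_bigr => j _; rewrite /f; ring.
under eq_bigr do rewrite big_split.
rewrite big_split /= [X in _ + X]exchange_big -mulr2n mulr_natl.
congr (_ *+ 2); rewrite expr2 !big_distrlr -sumrB.
by apply: eq_bigr => i _; rewrite -sumrB.
Qed.

Lemma cauchy_schwarz_sum (P : pred I) (x y : I -> R) :
  (\sum_(i | P i) x i * y i) ^+ 2 <=
  (\sum_(i | P i) x i ^+ 2) * (\sum_(i | P i) y i ^+ 2).
Proof.
rewrite -subr_ge0 -(pmulr_rge0 _ (ltr0Sn _ 1)) -lagrange_identity.
by apply: sumr_ge0 => i _; apply: sumr_ge0 => j _; exact: sqr_ge0.
Qed.

Lemma sqr_sum_le_card (P : pred I) (u : I -> R) :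
  (\sum_(i | P i) u i) ^+ 2 <= #|P|%:R * \sum_(i | P i) u i ^+ 2.
Proof.
have := cauchy_schwarz_sum P u (fun=> 1).
under eq_bigr do rewrite mulr1.
by rewrite expr1n sumr_const mulrC.
Qed.

(* Row k and column k of the Lagrange double sum carry the same squares. *)
Lemma sum_sqr_minor_row_le (x y : I -> R) (k : I) :
  \sum_l (x k * y l - x l * y k) ^+ 2 <=
  (\sum_l x l ^+ 2) * (\sum_l y l ^+ 2) - (\sum_l x l * y l) ^+ 2.
Proof.
rewrite -(ler_pM2l (ltr0Sn R 1)) -lagrange_identity mulr_natl mulr2n.
rewrite [leRHS](bigD1 k) //= lerD2l.
rewrite [leLHS](bigD1 k) //= subrr expr0n add0r.
apply: ler_sum => i _; rewrite (bigD1 k) //= -sqrrN opprB lerDl.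
by apply: sumr_ge0 => j _; exact: sqr_ge0.
Qed.

End SumsOfSquares.

Section SymmetricMatrix.
Variables (R : realFieldType) (n : nat) (H : 'I_n -> 'I_n -> R) (p : 'I_n -> R).
Hypothesis H_sym : forall i j, H i j = H j i.

Local Notation p_sq := (\sum_i p i ^+ 2).
Local Notation trH := (\sum_i H i i).
Local Notation H_quad := (\sum_i \sum_j H i j * p i * p j).
Local Notation Hp_sq := (\sum_i (\sum_j H i j * p j) ^+ 2).
Local Notation H_sq := (\sum_i \sum_j H i j ^+ 2).
Local Notation gap := (H_sq * p_sq - Hp_sq).
Local Notation residual :=
  (trH ^+ 2 * p_sq - 2 * trH * H_quad + Hp_sq).
Local Notation minor i l := (H i i * p l - H i l * p i).

Lemma sum_sqr_minor_le_gap : \sum_i \sum_l minor i l ^+ 2 <= gap.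
Proof.
by rewrite mulr_suml -sumrB; apply: ler_sum => i _; exact: sum_sqr_minor_row_le.
Qed.

Lemma residual_sum_minor : residual = \sum_l (\sum_i minor i l) ^+ 2.
Proof.
have col l : \sum_i minor i l = trH * p l - \sum_i H l i * p i.
  by rewrite sumrB mulr_suml; congr (_ - _); apply: eq_bigr => i _; rewrite H_sym.
under [RHS]eq_bigr => l _ do rewrite col.
have -> : H_quad = \sum_l p l * \sum_i H l i * p i.
  by apply: eq_bigr => l _; rewrite mulr_sumr; apply: eq_bigr => i _; ring.
rewrite [_ * p_sq]mulr_sumr [2 * trH * _]mulr_sumr -sumrB -big_split /=.
by apply: eq_bigr => l _; ring.
Qed.

Lemma residual_ge0 : 0 <= residual.
Proof. by rewrite residual_sum_minor; apply: sumr_ge0 => l _; exact: sqr_ge0. Qed.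

Lemma residual_le : (0 < n)%N -> residual <= (n%:R - 1) * gap.
Proof.
move=> n_gt0; apply: le_trans (ler_wpM2l _ sum_sqr_minor_le_gap); last first.
  by rewrite subr_ge0 ler1n.
rewrite residual_sum_minor exchange_big mulr_sumr; apply: ler_sum => l _.
rewrite (bigD1 l) //= [in leRHS](bigD1 l) //= subrr expr0n !add0r.
have -> : n%:R - 1 = #|[pred i | i != l]|%:R :> R.
  by rewrite cardC1 card_ord -subn1 natrB.
exact: sqr_sum_le_card.
Qed.

Lemma gap_ge0 : 0 <= gap.
Proof.
apply: le_trans sum_sqr_minor_le_gap.
by apply: sumr_ge0 => i _; apply: sumr_ge0 => l _; exact: sqr_ge0.
Qed.

Lemma residual_ge : (2 <= n)%N -> (3 - n%:R) * gap <= residual.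
Proof.
rewrite leq_eqVlt => /orP[/eqP n2 | n_gt2].
  (* For n = 2, (tr H) - H is the adjugate of H and residual = gap. *)
  move: H p H_sym; rewrite -n2 => H2 p2 H2_sym.
  rewrite !big_ord_recl !big_ord0 /= (H2_sym (lift ord0 ord0) ord0).
  by rewrite le_eqVlt; apply/orP; left; apply/eqP; ring.
apply: le_trans residual_ge0; rewrite mulr_le0_ge0 ?gap_ge0 // subr_le0.
by rewrite (ler_nat R 3).
Qed.

Lemma symmetric_form_ineq : (2 <= n)%N ->
  `|Hp_sq - trH * H_quad - 2^-1 * (H_sq - trH ^+ 2) * p_sq|
    <= (n%:R - 2) / 2 * gap.
Proof.
move=> n_ge2; have lo := residual_ge n_ge2; have hi := residual_le (ltnW n_ge2).
rewrite ler_norml; apply/andP; split; lra.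
Qed.

End SymmetricMatrix.

Section SecondDifference.
Variables (R : realType) (V : normedModType R).

Lemma is_derive_line (f : V -> R) (z e : V) (t : R) :
  differentiable f (z + t *: e) ->
  is_derive t 1 (fun s : R => f (z + s *: e)) ('D_e f (z + t *: e)).
Proof.
move=> df.
have quotE :
    (fun h : R => h^-1 *: (((fun s : R => f (z + s *: e)) \o shift t) (h *: 1)
                           - f (z + t *: e)))
  = (fun h => h^-1 *: ((f \o shift (z + t *: e)) (h *: e) - f (z + t *: e))).
  by apply: funext => h /=; rewrite [h%:A]mulr1 scalerDl addrCA.
have dl : derivable (fun s : R => f (z + s *: e)) t 1.
  by rewrite /derivable quotE; exact: diff_derivable.
have -> : 'D_e f (z + t *: e) = 'D_1 (fun s : R => f (z + s *: e)) t.
  by rewrite /derive quotE.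
exact: derivableP.
Qed.

Lemma second_difference_mvt (f : V -> R) (x u w : V) (h : R) : 0 <= h ->
  {in `[0, h] &, forall s t, differentiable f (x + s *: u + t *: w) /\
                             differentiable ('D_u f) (x + s *: u + t *: w)} ->
  exists2 s, s \in `[0, h] & exists2 t, t \in `[0, h] &
    f (x + h *: u + h *: w) - f (x + h *: u) - f (x + h *: w) + f x =
    h ^+ 2 * 'D_w ('D_u f) (x + s *: u + t *: w).
Proof.
move=> h_ge0 df.
have h_in : h \in `[0, h] by rewrite in_itv /= h_ge0 lexx.
have z_in : 0 \in `[0, h] by rewrite in_itv /= lexx h_ge0.
have der_s s : s \in `[0, h] -> is_derive s 1
    (fun s : R => f ((x + h *: w) + s *: u) - f (x + s *: u))
    ('D_u f ((x + h *: w) + s *: u) - 'D_u f (x + s *: u)).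
  move=> s_in; apply: is_deriveB; apply: is_derive_line.
    by rewrite addrAC; case: (df s h s_in h_in).
  by case: (df s 0 s_in z_in); rewrite scale0r addr0.
have [s s_in Es] := MVT_segment h_ge0 (fun s s_in => der_s s (subset_itv_oo_cc s_in))
  (derivable_within_continuous (fun s s_in => @ex_derive _ _ _ _ _ _ _ (der_s s s_in))).
have der_t t : t \in `[0, h] -> is_derive t 1
    (fun t : R => 'D_u f ((x + s *: u) + t *: w)) ('D_w ('D_u f) (x + s *: u + t *: w)).
  by move=> t_in; apply: is_derive_line; case: (df s t s_in t_in).
have [t t_in Et] := MVT_segment h_ge0 (fun t t_in => der_t t (subset_itv_oo_cc t_in))
  (derivable_within_continuous (fun t t_in => @ex_derive _ _ _ _ _ _ _ (der_t t t_in))).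
exists s => //; exists t => //.
move: Es Et; rewrite !scale0r !addr0 !subr0 ![x + h *: w + _]addrAC => Es Et.
transitivity (f (x + h *: u + h *: w) - f (x + h *: u) - (f (x + h *: w) - f x)).
  by ring.
by rewrite Es Et; ring.
Qed.

Lemma ball_add2 (x u w : V) (r s t : R) : `|u| <= 1 -> `|w| <= 1 ->
  `|s| + `|t| < r -> ball x r (x + s *: u + t *: w).
Proof.
move=> u_le1 w_le1 st_lt.
rewrite -ball_normE /= -addrA opprD addrA subrr sub0r normrN.
apply: le_lt_trans (ler_normD _ _) _; rewrite !normrZ.
apply: le_lt_trans st_lt; apply: lerD; exact: ler_piMr.
Qed.

End SecondDifference.

Section Schwarz.
Variables (R : realType) (n : nat).

Lemma normr_basis_vec_le1 (i : 'I_n) : `|basis_vec R i| <= 1.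
Proof.
rewrite [leLHS]/Num.norm /= mx_normrE; apply: bigmax_le => // -[a b] _ /=.
by rewrite /basis_vec mxE; case: (_ && _); rewrite ?normr1 ?normr0.
Qed.

Lemma second_difference_partial (f : 'rV[R]_n -> R) (x : 'rV[R]_n) (r : R)
    (i j : 'I_n) : 0 < r ->
  (forall y, ball x r y -> differentiable f y /\ differentiable (partial f i) y) ->
  let h := r / 4 in
  exists2 y, ball x r y &
    f (x + h *: basis_vec R i + h *: basis_vec R j) - f (x + h *: basis_vec R i)
    - f (x + h *: basis_vec R j) + f x = h ^+ 2 * partial (partial f i) j y.
Proof.
move=> r_gt0 df h.
have in_ball s t : s \in `[0, h] -> t \in `[0, h] ->
    ball x r (x + s *: basis_vec R i + t *: basis_vec R j).
  rewrite !in_itv /= => /andP[s_ge0 s_le] /andP[t_ge0 t_le].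
  apply: ball_add2; rewrite ?normr_basis_vec_le1 ?ger0_norm //.
  by move: s_le t_le; rewrite /h; lra.
have h_ge0 : 0 <= h by rewrite divr_ge0 // ltW.
have [s s_in [t t_in ->]] :=
  @second_difference_mvt _ _ f x (basis_vec R i) (basis_vec R j) h h_ge0
    (fun s t s_in t_in => df _ (in_ball s t s_in t_in)).
by exists (x + s *: basis_vec R i + t *: basis_vec R j) => //; exact: in_ball.
Qed.

Lemma partial_comm (f : 'rV[R]_n -> R) (x : 'rV[R]_n) (i j : 'I_n) :
  (\forall y \near x, [/\ differentiable f y, differentiable (partial f i) y
                        & differentiable (partial f j) y]) ->
  {for x, continuous (partial (partial f i) j)} ->
  {for x, continuous (partial (partial f j) i)} ->
  partial (partial f i) j x = partial (partial f j) i x.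
Proof.
move=> df cij cji.
apply/eqP; rewrite -subr_eq0 -normr_le0; apply/ler_addgt0Pr => e e_gt0.
rewrite add0r; have e2_gt0 : 0 < e / 2 by rewrite divr_gt0.
have /cvgrPdist_lt /(_ _ e2_gt0) Qij_near := cij.
have /cvgrPdist_lt /(_ _ e2_gt0) Qji_near := cji.
have near_all := filterS3 (nbhs_filter x)
  (fun y (dfy : [/\ _, _ & _]) Qy Q'y => conj dfy (conj Qy Q'y)) df Qij_near Qji_near.
move/nbhs_ballP: near_all => [r /= r_gt0 near_r].
have [yij /near_r[_ [Qij_yij _]] Eij] := second_difference_partial (i := i) j r_gt0
  (fun y By => let: conj (And3 dfy dify _) _ := near_r y By in conj dfy dify).
have [yji /near_r[_ [_ Qji_yji]] Eji] := second_difference_partial (i := j) i r_gt0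
  (fun y By => let: conj (And3 dfy _ dfjy) _ := near_r y By in conj dfy dfjy).
(* The second differences along (e_i, e_j) and along (e_j, e_i) are the same number. *)
have Q_eq : partial (partial f i) j yij = partial (partial f j) i yji.
  apply: (mulfI (_ : (r / 4) ^+ 2 != 0)); first by rewrite expf_neq0 // gt_eqF ?divr_gt0.
  apply: etrans (esym Eij) (etrans _ Eji).
  by congr (_ + _); rewrite [RHS]addrAC [x + _ *: basis_vec R j + _]addrAC.
have close (a b c d : R) : c = d -> `|a - c| < e / 2 -> `|b - d| < e / 2 -> `|a - b| <= e.
  move=> <- ac bc; apply: le_trans (ler_distD c _ _) _.
  by rewrite (distrC c) [leRHS]splitr; apply/ltW/ltrD.
exact: close Q_eq Qij_yij Qji_yji.
Qed.

End Schwarz.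

Lemma D2v_sym (R : realType) (n : nat) (U : set 'rV[R]_n) (v : 'rV[R]_n -> R)
    (x : 'rV[R]_n) :
  open U -> U x -> Ck U 2 v -> forall i j, D2v v x i j = D2v v x j i.
Proof.
move=> oU Ux [dv dpv] i j; apply: partial_comm.
- apply: filterS (open_nbhs_nbhs (conj oU Ux)) => y Uy.
  by split; [exact: dv | exact: (dpv _).1 | exact: (dpv _).1].
- by apply: (dpv _).2; rewrite inE.
- by apply: (dpv _).2; rewrite inE.
Qed.

Theorem lemma2p1 (R : realType) (n : nat) (U : set 'rV[R]_n)
  (v : 'rV[R]_n -> R) :
  (2 <= n)%N -> domain U -> smooth_on U v ->
  forall x, U x ->
  `| hessgrad_sq v x - lap v x * inflap v x
       - 2^-1 * (hess_sq v x - lap v x ^+ 2) * grad_sq v x |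
  <= (n%:R - 2) / 2 * (hess_sq v x * grad_sq v x - hessgrad_sq v x).
Proof.
move=> n_ge2 [U_open _] v_smooth x Ux.
exact: symmetric_form_ineq (D2v_sym U_open Ux (v_smooth 2%N)) n_ge2.
Qed.
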